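(* Let $m,n\in\mathbb{Z}\setminus\{0\}$ and let $q$ be an $(m,n)$-phenotype with $q\neq1$ and $q\neq\infty$. Then every transitive $\mathrm{BS}(m,n)$-action of phenotype $q$ on an infinite set fails to be primitive. In particular, no transitive $\mathrm{BS}(m,n)$-action of phenotype $q$ is highly transitive.
   Context: $\mathrm{BS}(m,n)=\langle b,t\mid tb^mt^{-1}=b^n\rangle$; actions are on the right. For a prime $p$, $|k|_p$ is the $p$-adic valuation. For $L\in\mathbb{Z}_{\ge1}$, $\mathrm{Ph}_{m,n}(L)=\prod p^{|L|_p}$ over primes $p$ with $|m|_p=|n|_p$ and $|L|_p>|n|_p$; $\mathrm{Ph}_{m,n}(\infty)=\infty$. The phenotype of a transitive action with stabilizer $\Lambda$ is $\mathrm{Ph}_{m,n}([\langle b\rangle:\langle b\rangle\cap\Lambda])$; an $(m,n)$-phenotype is a value so obtained. An action is primitive if it preserves no equivalence relation other than equality and the full relation; highly transitive means $d$-transitive (on $d$-tuples of distinct points) for all $d$. *)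

From mathcomp Require Import all_boot all_order all_algebra.
Set Implicit Arguments. Unset Strict Implicit. Unset Printing Implicit Defensive.
Import Order.TTheory GRing.Theory Num.Theory.

Section BS.
Variable X : Type.

Definition ziter (f finv : X -> X) (k : int) (x : X) : X :=
  match k with
  | Posz k => iter k f x
  | Negz k => iter k.+1 finv x
  end.

(* A right action of BS(m,n) = <b,t | t b^m t^-1 = b^n> on X:
   x.b = B x, x.b^-1 = Bi x, x.t = T x, x.t^-1 = Ti x. By the universal
   property of the presentation, such actions are exactly pairs of
   bijections (B,T) with x.(t b^m t^-1) = x.b^n. *)
Definition is_BS_action (m n : int) (B Bi T Ti : X -> X) : Prop :=
  [/\ cancel B Bi, cancel Bi B, cancel T Ti, cancel Ti T &
      forall x, Ti (ziter B Bi m (T x)) = ziter B Bi n x].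

Inductive gen := Gb | Gbi | Gt | Gti.

Definition act_gen (B Bi T Ti : X -> X) (g : gen) : X -> X :=
  match g with Gb => B | Gbi => Bi | Gt => T | Gti => Ti end.

(* right action: the first letter acts first *)
Definition act_word (B Bi T Ti : X -> X) (w : seq gen) (x : X) : X :=
  foldl (fun y g => act_gen B Bi T Ti g y) x w.

Definition transitive_action (B Bi T Ti : X -> X) : Prop :=
  forall x y, exists w, act_word B Bi T Ti w x = y.

Definition infinite_type : Prop :=
  forall (k : nat) (f : 'I_k -> X), exists x : X, forall i, f i <> x.

Definition primitive_action (B Bi T Ti : X -> X) : Prop :=
  forall R : X -> X -> Prop,
    (forall x, R x x) -> (forall x y, R x y -> R y x) ->
    (forall x y z, R x y -> R y z -> R x z) ->
    (forall w x y, R x y -> R (act_word B Bi T Ti w x) (act_word B Bi T Ti w y)) ->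
    (forall x y, R x y <-> x = y) \/ (forall x y, R x y).

Definition d_transitive (B Bi T Ti : X -> X) (d : nat) : Prop :=
  forall u v : 'I_d -> X, injective u -> injective v ->
    exists w, forall i, act_word B Bi T Ti w (u i) = v i.

Definition highly_transitive (B Bi T Ti : X -> X) : Prop :=
  forall d, d_transitive B Bi T Ti d.

(* [<b> : <b> \cap Stab(x0)] : Some l if <b> \cap Stab(x0) = <b^l>, l >= 1,
   None (= infinity) if <b> \cap Stab(x0) is trivial *)
Definition b_index (B : X -> X) (x0 : X) (L : option nat) : Prop :=
  match L with
  | Some l => (0 < l)%N /\ iter l B x0 = x0 /\
              (forall k, (0 < k < l)%N -> iter k B x0 <> x0)
  | None => forall k, (0 < k)%N -> iter k B x0 <> x0
  end.

End BS.

Definition Ph (m n : int) (L : option nat) : option nat :=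
  match L with
  | None => None
  | Some l => Some (\prod_(p < l.+1 | prime p && (logn p `|m| == logn p `|n|)
                                     && (logn p `|n| < logn p l)%N) p ^ logn p l)%N
  end.

(* the phenotype of the transitive action (B,T) computed at the base point x0
   (i.e. with Lambda the stabilizer of x0) is q *)
Definition has_phenotype (m n : int) (X : Type) (B : X -> X) (x0 : X)
  (q : option nat) : Prop :=
  exists L, b_index B x0 L /\ Ph m n L = q.

Definition is_phenotype (m n : int) (q : option nat) : Prop :=
  exists (X : Type) (B Bi T Ti : X -> X) (x0 : X),
    is_BS_action m n B Bi T Ti /\ transitive_action B Bi T Ti /\
    has_phenotype m n B x0 q.

From mathcomp Require Import all_boot all_order all_algebra.
From mathcomp Require Import zify.
From mathcomp.algebra_tactics Require Import ring.
From Stdlib Require Import Classical Wf_nat.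
Set Implicit Arguments. Unset Strict Implicit. Unset Printing Implicit Defensive.
Import Order.TTheory GRing.Theory Num.Theory.
Local Open Scope ring_scope.

(* Since q <> 1 there is a prime p with v_p(m) = v_p(n) = e < v_p(l), where l is
   the length of the b-orbit of the base point. The relation t b^m t^-1 = b^n
   lets t and t^-1 carry a b-orbit of length L with v_p(L) > e to one of the
   same kind, so by transitivity every b-orbit is finite with this property.
   Splitting each b-orbit of length L into the orbits of b^(L/p) gives a
   partition into blocks of size p; it is t-invariant because the p-part of
   gcd(L, n) stays below that of L. Its blocks are neither points nor the whole
   infinite set, so the action is imprimitive, and 2-transitive actions are
   primitive. *)

Lemma dvdn_of_logn_gt0 p n : (0 < logn p n)%N -> (p %| n)%N.
Proof. by rewrite logn_gt0 mem_primes => /and3P []. Qed.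

Lemma lt_logn_gt0 p e n : (e < logn p n)%N -> (0 < n)%N.
Proof. by case: n => //; rewrite logn0. Qed.

Section IntegerIterates.
Variables (X : Type) (B Bi : X -> X).
Hypotheses (BK : cancel B Bi) (BiK : cancel Bi B).
Local Notation bpow := (ziter B Bi).

Lemma ziterS z x : bpow (z + 1) x = B (bpow z x).
Proof.
case: z => [k|[|k]]; first by rewrite -PoszD addn1.
  by rewrite /= BiK.
have -> : Negz k.+1 + 1 = Negz k by lia.
by rewrite /= BiK.
Qed.

Lemma ziterD a b x : bpow (a + b) x = bpow a (bpow b x).
Proof.
elim/int_ind: a => [|k IH|k IH]; first by rewrite add0r.
- by rewrite -addn1 PoszD addrAC !ziterS IH.
- apply: (can_inj BK); rewrite -!ziterS.
  have -> : - (k.+1)%:Z + 1 = - k%:Z by lia.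
  by rewrite -IH; congr bpow; lia.
Qed.

Lemma ziterC a b x : bpow a (bpow b x) = bpow b (bpow a x).
Proof. by rewrite -!ziterD addrC. Qed.

Lemma ziter_inj z : injective (bpow z).
Proof. by move=> x y /(congr1 (bpow (- z))); rewrite -!ziterD addNr. Qed.

Lemma ziterM_conj (F : X -> X) (a c : int) :
  (forall x, bpow a (F x) = F (bpow c x)) ->
  forall k x, bpow (a * k) (F x) = F (bpow (c * k) x).
Proof.
move=> Fac; elim/int_ind=> [|k IH|k IH] x; first by rewrite !mulr0.
- by rewrite -addn1 PoszD !mulrDr !mulr1 !ziterD Fac IH.
- apply: (@ziter_inj a); rewrite -ziterD Fac -ziterD.
  have -> : a + a * - (k.+1)%:Z = a * - k%:Z by ring.
  by have -> : c + c * - (k.+1)%:Z = c * - k%:Z by ring.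
Qed.

Lemma ziterM_fix a x : bpow a x = x -> forall k, bpow (a * k) x = x.
Proof. by move=> ax k; apply: (@ziterM_conj (fun _ => x) a 0 (fun _ => ax) k x). Qed.

Lemma ziter_modz (L : int) z x : bpow L x = x -> bpow z x = bpow (z %% L)%Z x.
Proof. by move=> Lx; rewrite {1}(divz_eq z L) addrC ziterD mulrC ziterM_fix. Qed.

Lemma ziter_mod_orbit L z x : (0 < L)%N -> iter L B x = x ->
  bpow z x = iter `|(z %% L%:Z)%Z| B x /\ (`|(z %% L%:Z)%Z| < L)%N.
Proof.
move=> L0 Lx; have r0 : 0 <= (z %% L%:Z)%Z by apply: modz_ge0; lia.
have rL : (z %% L%:Z)%Z < L%:Z by apply: ltz_pmod; lia.
split; last lia.
by rewrite (ziter_modz z (Lx : bpow L x = x)) -[in LHS](gez0_abs r0).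
Qed.

(* [period 0 x] says that the b-orbit of x is infinite. *)
Definition period (L : nat) (x : X) := forall z : int, bpow z x = x <-> (L%:Z %| z)%Z.

Lemma period_least L x : (0 < L)%N -> iter L B x = x ->
  (forall k, (0 < k < L)%N -> iter k B x <> x) -> period L x.
Proof.
move=> L0 Lx Lmin z; split=> [zx|/dvdzP [k ->]]; last by rewrite mulrC ziterM_fix.
have [rx rL] := ziter_mod_orbit z L0 Lx; rewrite zx in rx.
apply/dvdz_mod0P/eqP; rewrite -absz_eq0 eqn0Ngt; apply/negP => r0.
by apply: (Lmin _ _ (esym rx)); rewrite r0.
Qed.

Lemma period_of_fix z x : z != 0 -> bpow z x = x -> exists2 L, (0 < L)%N & period L x.
Proof.
move=> z0 zx; have absx : iter `|z| B x = x.
  by have := ziterM_fix zx (sgz z); rewrite mulrC -abszEsg.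
have z0' : (0 < `|z|)%N by rewrite absz_gt0.
have [L [[[L0 Lx] Lmin] _]] := @dec_inh_nat_subset_has_unique_least_element
  (fun k => (0 < k)%N /\ iter k B x = x) (fun k => classic _) (ex_intro _ _ (conj z0' absx)).
exists L => //; apply: period_least => // k /andP [k0 kL] kx.
by have := Lmin k (conj k0 kx); lia.
Qed.

Lemma period_ziter L s x : period L x -> period L (bpow s x).
Proof.
move=> xL z; rewrite -xL ziterC; split=> [|->] //; exact: ziter_inj.
Qed.

Definition deep_period (p e : nat) (x : X) := exists L, period L x /\ (e < logn p L)%N.

(* If x has period L, this says y lies in the orbit of x under b^(L/p). *)
Definition b_sub_orbit (p : nat) (x y : X) :=
  exists z, y = bpow z x /\ bpow (p%:Z * z) x = x.

Lemma deep_period_ziter p e s x : deep_period p e x -> deep_period p e (bpow s x).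
Proof. by move=> [L [xL eL]]; exists L; split=> //; apply: period_ziter. Qed.

Section Conjugation.
Variables (F : X -> X) (a c : int) (p e : nat).
Hypotheses (Fac : forall x, bpow a (F x) = F (bpow c x)) (c0 : c != 0) (p_pr : prime p).
Hypothesis vp_c : (logn p `|c| <= e)%N.

Lemma deep_period_conj x : injective F -> a != 0 -> (e <= logn p `|a|)%N ->
  deep_period p e x -> deep_period p e (F x).
Proof.
move=> Finj a0 vp_a [L [xL eL]]; have L0 := lt_logn_gt0 eL.
have xcL : bpow (c * L%:Z) x = x by rewrite mulrC ziterM_fix //; apply/xL.
have FaL : bpow (a * L%:Z) (F x) = F x by rewrite (ziterM_conj Fac) xcL.
have [|L' L'0 FxL'] := period_of_fix _ FaL; first by rewrite mulf_neq0 //; lia.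
(* If L' = K p^v with v <= e, then b^(aK) fixes F x, so L divides cK. *)
exists L'; split=> //; rewrite ltnNge; apply/negP => vp_L'.
have [K p'K L'E] := pfactor_coprime p_pr L'0.
have K0 : (0 < K)%N by move: L'0; rewrite L'E muln_gt0 => /andP [].
have : bpow (a * K%:Z) (F x) = F x.
  apply/FxL'; rewrite dvdzE abszM L'E mulnC dvdn_mul //.
  by rewrite pfactor_dvdn ?absz_gt0 //; apply: leq_trans vp_a.
rewrite (ziterM_conj Fac) => /Finj /xL; rewrite dvdzE abszM => LcK.
have : (p ^ e.+1 %| `|c| * K)%N.
  by apply: dvdn_trans LcK; rewrite pfactor_dvdn.
rewrite pfactor_dvdn ?muln_gt0 ?absz_gt0 ?c0 // lognM ?absz_gt0 //.
by rewrite (logn_coprime p'K) addn0 ltnNge vp_c.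
Qed.

Lemma b_sub_orbit_conj x y : deep_period p e x -> b_sub_orbit p x y ->
  b_sub_orbit p (F x) (F y).
Proof.
move=> [L [xL eL]] [z [-> /xL Lpz]]; have L0 := lt_logn_gt0 eL.
(* gcd(L, c) divides L/p, hence z; so y = x.b^(c v w) and F y = (F x).b^(a v w). *)
set D := gcdn L `|c|; have DL : (D %| L)%N := dvdn_gcdl _ _.
have D0 : (0 < D)%N by rewrite gcdn_gt0 L0.
have vp_D : (logn p D <= e)%N.
  by apply: leq_trans vp_c; apply: dvdn_leq_log; [rewrite absz_gt0|exact: dvdn_gcdr].
have DpL : (D * p %| L)%N.
  rewrite -(divnK DL) mulnC dvdn_pmul2r //.
  by apply: dvdn_of_logn_gt0; rewrite logn_div //; lia.
have /dvdzP [w zE] : (D%:Z %| z)%Z.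
  rewrite -(dvdz_mul2r (p := p%:Z)); last by rewrite eqz_nat -lt0n prime_gt0.
  by apply: (dvdz_trans (n := L%:Z)); rewrite // mulrC.
have [u [v uvD]] := Bezoutz L%:Z c; have Dg : D%:Z = gcdz L c by [].
have xL1 : bpow L x = x by apply/xL.
exists (a * (v * w)); split.
  rewrite (ziterM_conj Fac); congr F.
  have -> : z = c * (v * w) + L%:Z * (u * w) by rewrite zE Dg -uvD; ring.
  by rewrite ziterD (ziterM_fix xL1).
rewrite mulrCA (ziterM_conj Fac); congr F.
have -> : c * (p%:Z * (v * w)) = p%:Z * z + L%:Z * - (p%:Z * (u * w)).
  by rewrite zE Dg -uvD; ring.
by rewrite ziterD (ziterM_fix xL1); apply/xL.
Qed.

End Conjugation.

Lemma b_sub_orbit_refl p x : b_sub_orbit p x x.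
Proof. by exists 0; rewrite mulr0. Qed.

Lemma b_sub_orbit_sym p x y : b_sub_orbit p x y -> b_sub_orbit p y x.
Proof.
move=> [z [-> pzx]]; exists (- z); split; first by rewrite -ziterD addNr.
by rewrite ziterC mulrN -mulrN1 ziterM_fix.
Qed.

Lemma b_sub_orbit_trans p x y w :
  b_sub_orbit p x y -> b_sub_orbit p y w -> b_sub_orbit p x w.
Proof.
move=> [z1 [-> pz1x]] [z2 [-> pz2y]]; exists (z2 + z1); split; first by rewrite ziterD.
rewrite mulrDr ziterD pz1x; apply: (@ziter_inj z1).
by rewrite ziterC.
Qed.

Lemma b_sub_orbit_ziter p s x y :
  b_sub_orbit p x y -> b_sub_orbit p (bpow s x) (bpow s y).
Proof.
by move=> [z [-> pzx]]; exists z; rewrite ziterC; split=> //; rewrite ziterC pzx.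
Qed.

Lemma b_sub_orbit_iter p L x y : (0 < L)%N -> iter L B x = x ->
  b_sub_orbit p x y -> exists2 k, (k < L)%N & y = iter k B x.
Proof.
move=> L0 Lx [z [-> _]]; have [-> rL] := ziter_mod_orbit z L0 Lx.
by exists `|(z %% L%:Z)%Z|%N.
Qed.

Lemma b_sub_orbit_iter_div p L x : (p %| L)%N -> period L x ->
  b_sub_orbit p x (iter (L %/ p) B x).
Proof.
move=> pL xL; exists (L %/ p)%N; split=> //; apply/xL.
by rewrite -PoszM mulnC divnK.
Qed.

Lemma iter_div_neq p L x : prime p -> (0 < L)%N -> (p %| L)%N -> period L x ->
  iter (L %/ p) B x <> x.
Proof.
move=> p_pr L0 pL xL /(xL (L %/ p)%:Z).1; rewrite dvdzE /=.
have Lp0 : (0 < L %/ p)%N by rewrite divn_gt0 ?prime_gt0 // dvdn_leq.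
move=> /(dvdn_leq Lp0); rewrite leqNgt ltn_Pdiv ?prime_gt1 //.
Qed.
End IntegerIterates.

Section Transitivity.
Variables (X : Type) (B Bi T Ti : X -> X).
Definition pair_fun (x y : X) (i : 'I_2) : X := if i == ord0 then x else y.

Lemma pair_fun_inj x y : x <> y -> injective (pair_fun x y).
Proof.
move=> xy [[|[|i]] i2] [[|[|j]] j2] //; rewrite /pair_fun /= => E; apply/val_inj => //.
by case: xy.
Qed.

Lemma two_transitive_primitive :
  d_transitive B Bi T Ti 2 -> primitive_action B Bi T Ti.
Proof.
move=> tr2 R Rrefl _ _ Rinv.
case: (classic (exists x y, x <> y /\ R x y)) => [[x [y [xy Rxy]]]|noR]; [right|left].
  move=> u v; case: (classic (u = v)) => [->|uv] //.
  have [w wxy] := tr2 _ _ (pair_fun_inj xy) (pair_fun_inj uv).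
  by have := Rinv w _ _ Rxy; rewrite (wxy ord0) (wxy ord_max).
move=> u v; split=> [Ruv|->] //; apply: NNPP => uv.
by apply: noR; exists u, v.
Qed.
End Transitivity.

Section BSAction.
Variables (m n : int) (X : Type) (B Bi T Ti : X -> X).
Hypothesis BS : is_BS_action m n B Bi T Ti.

Lemma ziter_T x : ziter B Bi m (T x) = T (ziter B Bi n x).
Proof. by case: BS => _ _ _ TiK BSrel; rewrite -BSrel TiK. Qed.

Lemma ziter_Ti x : ziter B Bi n (Ti x) = Ti (ziter B Bi m x).
Proof. by case: BS => _ _ _ TiK BSrel; rewrite -[in RHS](TiK x) BSrel. Qed.

Variable p : nat.
Hypotheses (m0 : m != 0) (n0 : n != 0) (p_pr : prime p).
Hypothesis vp_mn : logn p `|m| = logn p `|n|.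
Local Notation e := (logn p `|n|).

Lemma deep_period_act w x :
  deep_period B Bi p e x -> deep_period B Bi p e (act_word B Bi T Ti w x).
Proof.
case: BS => BK BiK TK TiK _.
elim: w x => [|g w IH] x xe //=; apply: IH; case: g xe => /=.
- exact: (deep_period_ziter BK BiK 1).
- exact: (deep_period_ziter BK BiK (-1)).
- by apply: (deep_period_conj BK BiK ziter_T) => //; [exact: can_inj TK|rewrite vp_mn].
- by apply: (deep_period_conj BK BiK ziter_Ti); rewrite -?vp_mn //; exact: can_inj TiK.
Qed.

Lemma b_sub_orbit_act w x y : deep_period B Bi p e x -> b_sub_orbit B Bi p x y ->
  b_sub_orbit B Bi p (act_word B Bi T Ti w x) (act_word B Bi T Ti w y).
Proof.
case: BS => BK BiK _ _ _.
elim: w x y => [|g w IH] x y xe xy //=.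
apply: IH; first exact: (deep_period_act [:: g]).
case: g xy => /=.
- exact: (b_sub_orbit_ziter BK BiK 1).
- exact: (b_sub_orbit_ziter BK BiK (-1)).
- by apply: (b_sub_orbit_conj (e := e) BK BiK ziter_T).
- by apply: (b_sub_orbit_conj (e := e) BK BiK ziter_Ti); rewrite ?vp_mn.
Qed.

Lemma BS_not_primitive x0 l : transitive_action B Bi T Ti -> infinite_type X ->
  (0 < l)%N -> period B Bi l x0 -> (e < logn p l)%N -> ~ primitive_action B Bi T Ti.
Proof.
case: BS => BK BiK _ _ _ tr Xinf l0 x0l vp_l prim.
have deep_all x : deep_period B Bi p e x.
  by have [w <-] := tr x0 x; apply: deep_period_act; exists l.
have pl : (p %| l)%N by apply: dvdn_of_logn_gt0; lia.
have lx0 : iter l B x0 = x0 by apply/(x0l l).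
have [u0 u0_out] := Xinf l (fun k => iter k B x0).
have [same|full] := prim _ (b_sub_orbit_refl B Bi p) (@b_sub_orbit_sym _ _ _ BK BiK p)
  (@b_sub_orbit_trans _ _ _ BK BiK p) (fun w x y => b_sub_orbit_act w (deep_all x)).
  case: (iter_div_neq p_pr l0 pl x0l).
  by apply/esym/same; apply: b_sub_orbit_iter_div.
have [k kl u0E] := b_sub_orbit_iter BK BiK l0 lx0 (full x0 u0).
by apply: (u0_out (Ordinal kl)).
Qed.
End BSAction.

Lemma phenotype_prime (m n : int) l q : Ph m n (Some l) = Some q -> q != 1%N ->
  exists p, [/\ prime p, logn p `|m| = logn p `|n| & (logn p `|n| < logn p l)%N].
Proof.
case=> <- q1; apply: NNPP => no_p; move/eqP: q1; apply.
apply: big1 => p /andP [/andP [p_pr /eqP vp_mn] vp_nl].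
by case: no_p; exists p.
Qed.

Theorem mainTheorem14 (m n : int) (q : nat) :
  m != 0%R -> n != 0%R -> is_phenotype m n (Some q) -> q != 1%N ->
  forall (X : Type) (B Bi T Ti : X -> X) (x0 : X),
    is_BS_action m n B Bi T Ti -> transitive_action B Bi T Ti ->
    has_phenotype m n B x0 (Some q) -> infinite_type X ->
    ~ primitive_action B Bi T Ti /\ ~ highly_transitive B Bi T Ti.
Proof.
move=> m0 n0 _ q1 X B Bi T Ti x0 BS tr [[l|] [x0l Phl]] Xinf //.
have [l0 [lx0 lmin]] := x0l.
have [BK BiK _ _ _] := BS.
have [p [p_pr vp_mn vp_nl]] := phenotype_prime Phl q1.
have not_prim := BS_not_primitive BS m0 n0 p_pr vp_mn tr Xinf l0
  (period_least BK BiK l0 lx0 lmin) vp_nl.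
by split=> // ht; apply/not_prim/two_transitive_primitive/ht.
Qed.
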